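(* Let $\mathbf{x}\in\mathrm{Gol}^{\triangle}_d\cap\mathcal{S}$. Then $x_{d-1}\leq 1$.
   Context: Fix $\epsilon,\gamma$ with $0<4\gamma<\epsilon<\frac12$. The Goldfarb cube $\mathrm{Gol}_d\subseteq\mathbb{R}^d$ is the set of $\mathbf{x}$ satisfying $-z_1\le x_1\le z_1:=1$, $-z_2\le x_2\le z_2:=1-\epsilon-\epsilon x_1$, and $-z_k\le x_k\le z_k:=1-\epsilon+\epsilon\gamma-\epsilon(x_{k-1}-\gamma x_{k-2})$ for $3\le k\le d$. Its vertices are $\mathbf{v}_\sigma$, $\sigma\in\{-1,1\}^d$, where $\mathbf{v}_\sigma$ is given by $x_1=\sigma_1$, $x_2=\sigma_2(1-\epsilon-\epsilon x_1)$, $x_k=\sigma_k(1-\epsilon+\epsilon\gamma-\epsilon(x_{k-1}-\gamma x_{k-2}))$ for $k\ge3$. The dual Goldfarb cube is $\mathrm{Gol}^{\triangle}_d=\bigcap_{\tau\in\{-1,1\}^d}\{\mathbf{x}\in\mathbb{R}^d:\mathbf{v}_\tau^T\mathbf{x}\le 1\}$. Let $\mathcal{S}:=\{\mathbf{x}\in\mathbb{R}^d: x_1=\ldots=x_{d-2}=0\}$. *)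

From mathcomp Require Import all_boot all_order all_algebra.
Set Implicit Arguments. Unset Strict Implicit. Unset Printing Implicit Defensive.
Import Order.TTheory GRing.Theory Num.Theory.
Local Open Scope ring_scope.

(* Coordinates are 1-indexed as in the paper: coordinate k (1 <= k <= d)
   of a vector x : 'rV[R]_d is x 0 (k-1). A sign vector sigma in {-1,1}^d is
   represented by s : 'I_d -> bool (true = +1, false = -1). *)

Definition sgn {R : ringType} (b : bool) : R := if b then 1 else -1.

Section Goldfarb.
Variables (R : realFieldType) (eps gam : R) (d : nat).

(* sign of coordinate k (1-based); out of range defaults to +1 (never used) *)
Definition sig_at (s : 'I_d -> bool) (k : nat) : R :=
  match insub k.-1 with Some i => sgn (s i) | None => 1 end.

(* gold_pair s k = (x_k, x_{k+1}) of the vertex v_sigma, for k >= 1 *)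
Fixpoint gold_pair (s : 'I_d -> bool) (k : nat) : R * R :=
  match k with
  | 0 => (0, 0)
  | 1 => let x1 := sig_at s 1 in (x1, sig_at s 2 * (1 - eps - eps * x1))
  | k'.+1 => let p := gold_pair s k' in
             (p.2, sig_at s k.+1 *
                   (1 - eps + eps * gam - eps * (p.2 - gam * p.1)))
  end.

Definition gold_vertex (s : 'I_d -> bool) : 'rV[R]_d :=
  \row_(i < d) (gold_pair s i.+1).1.

Definition dual_gold : pred 'rV[R]_d :=
  fun x => [forall s : {ffun 'I_d -> bool},
              \sum_(i < d) gold_vertex s 0 i * x 0 i <= 1].

Definition subS : pred 'rV[R]_d :=
  fun x => [forall i : 'I_d, (i.+1 <= d - 2)%N ==> (x 0 i == 0)].

End Goldfarb.

From mathcomp Require Import all_boot all_order all_algebra.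
From mathcomp Require Import zify ring lra.
Import Order.TTheory GRing.Theory Num.Theory.
Set Implicit Arguments.
Unset Strict Implicit.
Local Open Scope ring_scope.

(* For x in S only the last two coordinates of x are nonzero, so the facet of
   the dual cube given by v_sigma reads v_{d-1} x_{d-1} + v_d x_d <= 1. Take
   sigma = (-1, ..., -1, +1, +-1). Along a prefix of -1 signs the vertex stays
   at (-1, ..., -1), so v_{d-1} = 1 for both choices, while v_d = sigma_d * z_d
   with z_d independent of sigma_d. Adding the two facet inequalities gives
   2 x_{d-1} <= 2. *)

Section GoldfarbVertices.
Variables (R : realFieldType) (eps gam : R) (d : nat).
Implicit Types (s t : 'I_d -> bool) (k m : nat).

(* The bound z_{k+1} evaluated at the vertex v_s; the value at k = 0 is junk. *)
Definition gold_mag s k : R :=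
  match k with
  | 0 => 0
  | 1 => 1 - eps - eps * sig_at R s 1
  | k'.+1 => 1 - eps + eps * gam
             - eps * ((gold_pair eps gam s k').2 - gam * (gold_pair eps gam s k').1)
  end.

Lemma gold_pair_snd s k : (0 < k)%N ->
  (gold_pair eps gam s k).2 = sig_at R s k.+1 * gold_mag s k.
Proof. by case: k => [|[|k]]. Qed.

Lemma gold_pair_fst_succ s k : (0 < k)%N ->
  (gold_pair eps gam s k.+1).1 = (gold_pair eps gam s k).2.
Proof. by case: k. Qed.

Lemma gold_mag_succ s k : (0 < k)%N ->
  gold_mag s k.+1 = 1 - eps + eps * gam
    - eps * ((gold_pair eps gam s k).2 - gam * (gold_pair eps gam s k).1).
Proof. by case: k. Qed.

Lemma gold_pair_ext s t k :
  (forall m, (0 < m <= k.+1)%N -> sig_at R s m = sig_at R t m) ->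
  gold_pair eps gam s k = gold_pair eps gam t k.
Proof.
elim: k => [|[|k] IH] // st; first by rewrite /= !st.
rewrite /= -/(gold_pair eps gam s k.+1) -/(gold_pair eps gam t k.+1).
by rewrite IH ?st ?leqnn // => m /andP[m0 mk]; apply: st; lia.
Qed.

Lemma gold_mag_ext s t k :
  (forall m, (0 < m <= k)%N -> sig_at R s m = sig_at R t m) ->
  gold_mag s k = gold_mag t k.
Proof.
case: k => [|[|k]] // st; first by rewrite /= st.
by rewrite !gold_mag_succ // (@gold_pair_ext s t k.+1) // => m /andP[m0 mk];
  apply: st; lia.
Qed.

(* At x_{k-1} = x_k = -1 the right-hand side
   1 - eps + eps * gam - eps * (x_k - gam * x_{k-1}) equals 1 identically. *)
Lemma gold_prefix_neg s k : (0 < k)%N ->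
  (forall m, (0 < m <= k)%N -> sig_at R s m = -1) ->
  (gold_pair eps gam s k).1 = -1 /\ gold_mag s k = 1.
Proof.
elim: k => [|k IH] // _ neg.
case: (posnP k) => [->|k0]; first by rewrite /= neg //; split=> //; ring.
have [fst1 mag1] : (gold_pair eps gam s k).1 = -1 /\ gold_mag s k = 1.
  by apply: IH => // m /andP[m0 mk]; apply: neg; lia.
have snd1 : (gold_pair eps gam s k).2 = -1.
  by rewrite gold_pair_snd // mag1 neg //; [ring | lia].
rewrite gold_pair_fst_succ //; split=> //.
by rewrite gold_mag_succ // snd1 fst1; ring.
Qed.

Lemma gold_pair_fst_after_neg s k : (0 < k)%N ->
  (forall m, (0 < m < k)%N -> sig_at R s m = -1) ->
  (gold_pair eps gam s k).1 = sig_at R s k.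
Proof.
case: k => [|[|k]] // _ neg.
rewrite gold_pair_fst_succ // gold_pair_snd //.
have [_ ->] := @gold_prefix_neg s k.+1 erefl (fun m mk => neg m mk).
exact: mulr1.
Qed.

Lemma gold_pair_fst_flip s t k : (0 < k)%N ->
  (forall m, (0 < m < k)%N -> sig_at R s m = sig_at R t m) ->
  sig_at R t k = - sig_at R s k ->
  (gold_pair eps gam t k).1 = - (gold_pair eps gam s k).1.
Proof.
case: k => [|[|k]] // _ st flip.
rewrite !gold_pair_fst_succ // !gold_pair_snd // flip mulNr.
by rewrite (@gold_mag_ext s t k.+1) // => m /andP[m0 mk]; apply: st; lia.
Qed.

Lemma gold_vertexE s (j : 'I_d) :
  gold_vertex eps gam s 0 j = (gold_pair eps gam s j.+1).1.
Proof. by rewrite mxE. Qed.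

Lemma sig_at_ffun (f : nat -> bool) m : (0 < m <= d)%N ->
  sig_at R [ffun j : 'I_d => f j.+1] m = sgn (f m).
Proof.
case/andP=> m0 md; rewrite /sig_at; case: insubP => [j _ jm|]; last by lia.
by rewrite ffunE jm prednK.
Qed.

End GoldfarbVertices.

Lemma dot_subS (R : realFieldType) (d : nat) (v x : 'rV[R]_d) (i l : 'I_d) :
  (2 <= d)%N -> val i = (d - 2)%N -> val l = d.-1 -> x \in @subS R d ->
  \sum_j v 0 j * x 0 j = v 0 i * x 0 i + v 0 l * x 0 l.
Proof.
move=> d2 vi vl /forallP xS.
rewrite (bigD1 i) //= (bigD1 l) /=; last by rewrite -val_eqE vi vl; apply/eqP; lia.
rewrite big1 ?addr0 // => j /andP[ji jl].
rewrite (eqP (implyP (xS j) _)) ?mulr0 //.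
by move: ji jl; rewrite -!val_eqE vi vl /=; have := ltn_ord j; lia.
Qed.

Theorem lemma3 (R : realFieldType) (eps gam : R) (d : nat)
  (Hgam : 0 < gam) (Hge : 4 * gam < eps) (Heps : eps < 1 / 2)
  (Hd : (2 <= d)%N) (x : 'rV[R]_d)
  (Hx : x \in @dual_gold R eps gam d) (HS : x \in @subS R d)
  (i : 'I_d) (Hi : val i = (d - 2)%N) :
  x 0 i <= 1.
Proof.
have lP : (d.-1 < d)%N by lia.
pose l := Ordinal lP.
pose sigma c (m : nat) := (m == d.-1) || c && (m == d).
pose s c := [ffun j : 'I_d => sigma c j.+1].
have sE c m : (0 < m <= d)%N -> sig_at R (s c) m = sgn (sigma c m).
  exact: sig_at_ffun.
have v_i c : gold_vertex eps gam (s c) 0 i = 1.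
  rewrite gold_vertexE Hi (_ : (d - 2).+1 = d.-1); last by lia.
  rewrite gold_pair_fst_after_neg; [by rewrite sE /sigma ?eqxx //; lia | by lia |].
  move=> m /andP[m0 mi].
  have [/negbTE md1 /negbTE md] : m != d.-1 /\ m != d by split; lia.
  by rewrite sE /sigma ?md1 ?md ?andbF //; lia.
have v_l : gold_vertex eps gam (s true) 0 l = - gold_vertex eps gam (s false) 0 l.
  rewrite !gold_vertexE (_ : l.+1 = d); last by rewrite /= prednK //; lia.
  apply: gold_pair_fst_flip => [|m /andP[m0 md]|]; first by lia.
    have /negbTE md' : m != d by lia.
    by rewrite !sE /sigma ?md' ?andbF //; lia.
  have /negbTE dd : d != d.-1 by lia.
  by rewrite !sE /sigma ?dd ?eqxx ?opprK //; lia.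
have facet c := forallP Hx (s c).
move: (facet true) (facet false).
rewrite !(@dot_subS R d _ x i l Hd Hi erefl HS) !v_i v_l.
lra.
Qed.
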